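(* Let $f:\mathbb{R}^n\to\mathbb{R}$ be continuously differentiable with $L$-Lipschitz continuous gradient ($L>0$) and bounded below on $\mathbb{R}^n$ by $f_{\mathrm{low}}$. Run the direct-search algorithm described below with $\Omega=\mathbb{R}^n$, and suppose that at every iteration $k$ the polling set $\mathcal{D}_k$ is a $\Lambda$-positive spanning set for $B(x_k,\alpha_k)$ and satisfies $\|d\|\le d_{\max}\alpha_k$ for all $d\in\mathcal{D}_k$, for some constants $\Lambda>0$, $d_{\max}>0$. If $\nabla f(x_k)\neq 0$ and $\alpha_k<\frac{2\|\nabla f(x_k)\|}{(Ld_{\max}^2+\sigma)\Lambda}$, then iteration $k$ is successful.
   Context: $\|\cdot\|$ is the Euclidean norm, $B(y,r)=\{z:\|z-y\|\le r\}$. Given $x\in\mathbb{R}^n$, $\alpha>0$, $\Lambda>0$, a finite set $\{d_1,\ldots,d_p\}\subset\mathbb{R}^n$ is a $\Lambda$-positive spanning set for $B(x,\alpha)$ if for every $v\in B(0,\alpha)$ there exists $c\in\mathbb{R}^p$, $c\ge0$, with $v=\sum_i c_id_i$ and $\sum_i c_i\le\Lambda$. The algorithm (for minimizing $f$ over a set $\Omega$, here $\Omega=\mathbb{R}^n$): inputs $x_0\in\Omega$, $\alpha_{\max}>0$, $\alpha_0\in(0,\alpha_{\max}]$, $\sigma>0$, $0<\gamma_{\mathrm{dec}}<1<\gamma_{\mathrm{inc}}$. For $k=0,1,2,\ldots$: compute a finite polling set $\mathcal{D}_k\subset\mathbb{R}^n$; if there exists $d_k\in\mathcal{D}_k$ with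 $x_k+d_k\in\Omega$ and $f(x_k+d_k)<f(x_k)-\frac{\sigma}{2}\alpha_k^2$, set $x_{k+1}=x_k+d_k$ and $\alpha_{k+1}=\min\{\gamma_{\mathrm{inc}}\alpha_k,\alpha_{\max}\}$ (the iteration is called successful); otherwise set $x_{k+1}=x_k$, $\alpha_{k+1}=\gamma_{\mathrm{dec}}\alpha_k$ (unsuccessful). *)

From HB Require Import structures.
From mathcomp Require Import all_boot all_order all_algebra.
From mathcomp Require Import all_classical all_reals all_analysis.
Set Implicit Arguments. Unset Strict Implicit. Unset Printing Implicit Defensive.
Import Order.TTheory GRing.Theory Num.Theory.
Import numFieldNormedType.Exports.
Local Open Scope ring_scope.

Section Defs.
Variables (R : realType) (n : nat).
Notation vec := 'rV[R]_n.

Definition dotv (u v : vec) : R := \sum_(i < n) u ord0 i * v ord0 i.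
Definition enorm (v : vec) : R := Num.sqrt (dotv v v).

(* Lambda-positive spanning set for B(x, alpha) (x plays no role, as in the paper) *)
Definition pss_for (D : seq vec) (x : vec) (alpha Lambda : R) : Prop :=
  forall v : vec, enorm v <= alpha ->
    exists c : 'I_(size D) -> R,
      (forall i, 0 <= c i) /\
      v = \sum_(i < size D) c i *: D`_i /\
      \sum_(i < size D) c i <= Lambda.

Definition decrease (f : vec -> R) (sigma : R) (x d : vec) (alpha : R) : Prop :=
  f (x + d) < f x - sigma / 2 * alpha ^+ 2.

Definition successful (f : vec -> R) (sigma : R) (D : nat -> seq vec)
  (x : nat -> vec) (alpha : nat -> R) (k : nat) : Prop :=
  exists2 d, d \in D k & decrease f sigma (x k) d (alpha k).

Definition direct_search_run (f : vec -> R) (x0 : vec)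
  (alpha_max alpha0 sigma gdec ginc : R) (D : nat -> seq vec)
  (x : nat -> vec) (alpha : nat -> R) : Prop :=
  [/\ (0 < alpha_max) /\ (0 < alpha0 <= alpha_max) /\ (0 < sigma)
        /\ (0 < gdec < 1) /\ (1 < ginc),
      x 0%N = x0, alpha 0%N = alpha0 &
      forall k : nat,
        (successful f sigma D x alpha k ->
           (exists d, [/\ d \in D k, decrease f sigma (x k) d (alpha k)
                        & x k.+1 = x k + d]) /\
           alpha k.+1 = Num.min (ginc * alpha k) alpha_max) /\
        (~ successful f sigma D x alpha k ->
           x k.+1 = x k /\ alpha k.+1 = gdec * alpha k)].
End Defs.

From HB Require Import structures.
From mathcomp Require Import all_boot all_order all_algebra.
From mathcomp Require Import all_classical all_reals all_analysis.
From mathcomp Require Import lra.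
Set Implicit Arguments. Unset Strict Implicit. Unset Printing Implicit Defensive.
Import Order.TTheory GRing.Theory Num.Theory.
Import numFieldNormedType.Exports.
Local Open Scope ring_scope.

(* If iteration [k] fails, then every poll step [d] has
   [f (x + d) >= f x - sigma alpha^2 / 2], while the descent lemma gives
   [f (x + d) <= f x + <grad f x, d> + L |d|^2 / 2] with [|d| <= dmax alpha];
   hence [<grad f x, d> >= - (L dmax^2 + sigma) alpha^2 / 2] on the polling set.
   Writing any [v] of the ball [B(0, alpha)] as a nonnegative combination of
   poll steps with total weight at most [Lambda] extends this lower bound,
   multiplied by [Lambda], to [v = - alpha grad f x / |grad f x|], i.e.
   [2 |grad f x| <= (L dmax^2 + sigma) Lambda alpha], against the bound on
   [alpha]. *)

Section EuclideanSpace.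
Variables (R : realType) (n : nat).
Implicit Types (u v w : 'rV[R]_n) (a : R).

Lemma dotvC u v : dotv u v = dotv v u.
Proof. by apply: eq_bigr => i _; rewrite mulrC. Qed.

Lemma dotvDr u v w : dotv u (v + w) = dotv u v + dotv u w.
Proof. by rewrite /dotv -big_split; apply: eq_bigr => i _; rewrite !mxE mulrDr. Qed.

Lemma dotvZr a u v : dotv u (a *: v) = a * dotv u v.
Proof. by rewrite /dotv mulr_sumr; apply: eq_bigr => i _; rewrite !mxE mulrCA. Qed.

Lemma dotv0r u : dotv u 0 = 0.
Proof. by rewrite /dotv big1 // => i _; rewrite mxE mulr0. Qed.

Lemma dotvBr u v w : dotv u (v - w) = dotv u v - dotv u w.
Proof. by rewrite dotvDr -scaleN1r dotvZr mulN1r. Qed.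

Lemma dotvZl a u v : dotv (a *: u) v = a * dotv u v.
Proof. by rewrite !(dotvC _ v) dotvZr. Qed.

Lemma dotvBl u v w : dotv (u - v) w = dotv u w - dotv v w.
Proof. by rewrite !(dotvC _ w) dotvBr. Qed.

Lemma dotv_sumr m (c : 'I_m -> R) (F : 'I_m -> 'rV[R]_n) u :
  dotv u (\sum_(i < m) c i *: F i) = \sum_(i < m) c i * dotv u (F i).
Proof.
rewrite (big_morph (dotv u) (dotvDr u) (dotv0r u)).
by apply: eq_bigr => i _; rewrite dotvZr.
Qed.

Lemma dotvv_ge0 u : 0 <= dotv u u.
Proof. by apply: sumr_ge0 => i _; rewrite -expr2 sqr_ge0. Qed.

Lemma dotvv_eq0 u : (dotv u u == 0) = (u == 0).
Proof.
apply/idP/eqP => [|->]; last by rewrite dotv0r.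
rewrite psumr_eq0 => [/allP u0|i _]; last by rewrite -expr2 sqr_ge0.
apply/matrixP => i j; rewrite !mxE (ord1 i).
by have := u0 j (mem_index_enum _); rewrite /= mulf_eq0 orbb => /eqP.
Qed.

Lemma enorm_ge0 u : 0 <= enorm u.
Proof. exact: sqrtr_ge0. Qed.

Lemma enorm_eq0 u : (enorm u == 0) = (u == 0).
Proof. by rewrite sqrtr_eq0 le_eqVlt ltNge dotvv_ge0 orbF dotvv_eq0. Qed.

Lemma enorm0 : enorm (0 : 'rV[R]_n) = 0.
Proof. by apply/eqP; rewrite enorm_eq0. Qed.

Lemma enorm_gt0 u : (0 < enorm u) = (u != 0).
Proof. by rewrite lt_def enorm_eq0 enorm_ge0 andbT. Qed.

Lemma sqr_enorm u : enorm u ^+ 2 = dotv u u.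
Proof. by rewrite sqr_sqrtr // dotvv_ge0. Qed.

Lemma enormZ a u : enorm (a *: u) = `|a| * enorm u.
Proof.
by rewrite /enorm dotvZl dotvZr mulrA -expr2 sqrtrM ?sqr_ge0 // sqrtr_sqr.
Qed.

Lemma cauchy_schwarz u v : dotv u v <= enorm u * enorm v.
Proof.
have [->|u0] := eqVneq u 0; first by rewrite dotvC dotv0r mulr_ge0 ?enorm_ge0.
have [->|v0] := eqVneq v 0; first by rewrite dotv0r mulr_ge0 ?enorm_ge0.
have st0 : 0 < enorm u * enorm v by rewrite mulr_gt0 ?enorm_gt0.
have := dotvv_ge0 (enorm v *: u - enorm u *: v).
rewrite dotvBl !dotvBr !dotvZl !dotvZr -!sqr_enorm (dotvC v u).
nra.
Qed.

End EuclideanSpace.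

Section PositiveSpanning.
Variables (R : realType) (n : nat).
Implicit Types (g v : 'rV[R]_n) (D : seq 'rV[R]_n).

Lemma pss_dotv_ge D x alpha Lambda g K :
  pss_for D x alpha Lambda -> 0 <= K -> (forall d, d \in D -> - K <= dotv g d) ->
  forall v, enorm v <= alpha -> - (K * Lambda) <= dotv g v.
Proof.
move=> pss K0 gD v /pss[c [c0 [-> cLambda]]]; rewrite dotv_sumr.
apply: le_trans (_ : - K * \sum_(i < size D) c i <= _).
  by rewrite mulNr lerN2 ler_wpM2l.
rewrite mulr_sumr; apply: ler_sum => i _; rewrite mulrC ler_wpM2l //.
exact/gD/mem_nth.
Qed.

(* Test against [v = - (alpha / |g|) g], the worst direction in the ball. *)
Lemma mul_enorm_le_of_dotv_ge g alpha M : 0 <= alpha ->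
  (forall v, enorm v <= alpha -> - M <= dotv g v) -> alpha * enorm g <= M.
Proof.
move=> alpha0 gM; have [->|g0] := eqVneq g 0.
  by have := gM 0; rewrite enorm0 dotv0r mulr0 oppr_le0; apply.
have gpos : 0 < enorm g by rewrite enorm_gt0.
have := gM (- (alpha / enorm g) *: g).
rewrite enormZ normrN ger0_norm ?divr_ge0 ?enorm_ge0 // divfK ?gt_eqF //.
by rewrite dotvZr -sqr_enorm expr2 mulrA !mulNr divfK ?gt_eqF // lerN2; apply.
Qed.

End PositiveSpanning.

(* The difference quotient of [s |-> f (y + s d)] at [t] is that of [f] at
   [y + t d] in the direction [d]. *)
Lemma is_derive_line (R : realType) (V W : normedModType R) (f : V -> W)
    (y d : V) (t : R) :
  differentiable f (y + t *: d) ->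
  is_derive t 1 (fun s => f (y + s *: d)) ('d f (y + t *: d) d).
Proof.
move=> df.
have quotE : (fun s : R =>
      s^-1 *: (((fun s => f (y + s *: d)) \o shift t) (s *: 1) - f (y + t *: d)))
    = (fun s => s^-1 *: ((f \o shift (y + t *: d)) (s *: d) - f (y + t *: d))).
  by apply/funext => s /=; rewrite -[s%:A]/(s * 1) mulr1 scalerDl addrCA.
apply: DeriveDef; first by rewrite /derivable quotE; exact: diff_derivable.
by rewrite /derive quotE -/(derive f (y + t *: d) d) deriveE.
Qed.

Section Descent.
Variables (R : realType) (n : nat) (f : 'rV[R]_n -> R).
Variables (grad : 'rV[R]_n -> 'rV[R]_n) (L : R).
Hypothesis f_diff : forall y, differentiable f y.
Hypothesis f_grad : forall y v, 'd f y v = dotv (grad y) v.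
Hypothesis grad_lipschitz :
  forall y z, enorm (grad y - grad z) <= L * enorm (y - z).

(* Mean value theorem for [phi s = f (y + s d) - s <grad y, d> - s^2 L |d|^2 / 2]
   on [0, 1]: the Lipschitz bound makes [phi' <= 0] on [0, +oo). *)
Lemma descent_lemma y d :
  f (y + d) <= f y + dotv (grad y) d + L / 2 * enorm d ^+ 2.
Proof.
set a := dotv (grad y) d; set b := L / 2 * enorm d ^+ 2.
pose phi : R -> R :=
  (fun s => f (y + s *: d)) - a \*: (@id R) - b \*: ((@id R) * (@id R)).
have phiE s : phi s = f (y + s *: d) - a * s - b * (s * s) by [].
pose dphi (t : R) := dotv (grad (y + t *: d)) d - a - b * (t + t).
have phi_deriv (t : R) : is_derive t (1 : R) phi (dphi t).
  apply: is_derive_eq.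
    by apply: is_deriveB; first apply: is_deriveB; first exact: is_derive_line.
  by rewrite /dphi f_grad /= -[a%:A]/(a * 1) -[t%:A]/(t * 1) !mulr1.
have dphi_le0 t : 0 <= t -> dphi t <= 0.
  move=> t0; have : dotv (grad (y + t *: d) - grad y) d <= L * t * enorm d ^+ 2.
    apply: (le_trans (cauchy_schwarz _ _)).
    rewrite expr2 mulrA ler_wpM2r ?enorm_ge0 // -mulrA.
    have := grad_lipschitz (y + t *: d) y.
    by rewrite addrAC subrr add0r enormZ ger0_norm.
  by rewrite dotvBl -/a /dphi /b; lra.
have phi_cont : {within `[0, 1], continuous phi}%classic.
  by apply: derivable_within_continuous => t _; exact: ex_derive.
have [c /andP[c0 _] mvt] := MVT ltr01 (fun t _ => phi_deriv t) phi_cont.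
have := dphi_le0 c (ltW c0); rewrite subr0 mulr1 in mvt.
by rewrite -mvt !phiE scale0r scale1r addr0 !mulr0 !mulr1 subr0; lra.
Qed.

Lemma dotv_grad_ge_of_not_decrease sigma y d alpha dmax : 0 <= L ->
  enorm d <= dmax * alpha -> ~ decrease f sigma y d alpha ->
  - ((L * dmax ^+ 2 + sigma) / 2 * alpha ^+ 2) <= dotv (grad y) d.
Proof.
move=> L0 d_le /negP; rewrite -leNgt => f_le.
have := descent_lemma y d.
have : enorm d ^+ 2 <= dmax ^+ 2 * alpha ^+ 2.
  by rewrite -exprMn ler_sqr ?nnegrE ?enorm_ge0 // (le_trans (enorm_ge0 d)).
nra.
Qed.

Lemma enorm_grad_le_of_unsuccessful_poll sigma Lambda dmax D y alpha :
  0 <= L -> 0 <= sigma -> 0 < alpha -> pss_for D y alpha Lambda ->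
  (forall d, d \in D -> enorm d <= dmax * alpha) ->
  (forall d, d \in D -> ~ decrease f sigma y d alpha) ->
  2 * enorm (grad y) <= (L * dmax ^+ 2 + sigma) * Lambda * alpha.
Proof.
move=> L0 sigma0 alpha0 pss D_le D_fail.
set K := (L * dmax ^+ 2 + sigma) / 2 * alpha ^+ 2.
have K0 : 0 <= K.
  by rewrite /K mulr_ge0 ?sqr_ge0 // divr_ge0 // addr_ge0 // mulr_ge0 // sqr_ge0.
have gD d : d \in D -> - K <= dotv (grad y) d.
  by move=> dD; exact: dotv_grad_ge_of_not_decrease L0 (D_le d dD) (D_fail d dD).
have := mul_enorm_le_of_dotv_ge (ltW alpha0) (pss_dotv_ge pss K0 gD).
rewrite /K => bound; rewrite -(ler_pM2l alpha0); lra.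
Qed.

End Descent.

Lemma direct_search_run_alpha_gt0 (R : realType) (n : nat) (f : 'rV[R]_n -> R)
    x0 alpha_max alpha0 sigma gdec ginc D x alpha :
  direct_search_run f x0 alpha_max alpha0 sigma gdec ginc D x alpha ->
  forall k, 0 < alpha k.
Proof.
move=> [[amax0 [/andP[a00 _] [_ [/andP[gdec0 _] ginc1]]]] _ alpha_0 step].
elim=> [|k IHk]; first by rewrite alpha_0.
have [succ|fail] := pselect (successful f sigma D x alpha k).
- by rewrite ((step k).1 succ).2 lt_min amax0 andbT mulr_gt0 // (lt_trans ltr01).
- by rewrite ((step k).2 fail).2 mulr_gt0.
Qed.

Theorem lemma4p2 (R : realType) (n : nat) (f : 'rV[R]_n -> R)
  (grad : 'rV[R]_n -> 'rV[R]_n) (L flow : R)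
  (x0 : 'rV[R]_n) (alpha_max alpha0 sigma gdec ginc Lambda dmax : R)
  (D : nat -> seq 'rV[R]_n) (x : nat -> 'rV[R]_n) (alpha : nat -> R) (k : nat) :
  (* f is C^1 with gradient grad *)
  (forall y, differentiable f y) ->
  (forall y v, 'd f y v = dotv (grad y) v) ->
  continuous grad ->
  (* L-Lipschitz gradient, L > 0 *)
  0 < L ->
  (forall y z, enorm (grad y - grad z) <= L * enorm (y - z)) ->
  (* bounded below by flow *)
  (forall y, flow <= f y) ->
  direct_search_run f x0 alpha_max alpha0 sigma gdec ginc D x alpha ->
  0 < Lambda -> 0 < dmax ->
  (forall j, pss_for (D j) (x j) (alpha j) Lambda) ->
  (forall j, forall d, d \in D j -> enorm d <= dmax * alpha j) ->
  grad (x k) != 0 ->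
  alpha k < 2 * enorm (grad (x k)) / ((L * dmax ^+ 2 + sigma) * Lambda) ->
  successful f sigma D x alpha k.
Proof.
move=> f_diff f_grad _ L0 grad_lip _ run Lambda0 _ pss D_le _ alpha_lt.
have [[_ [_ [sigma0 _]]] _ _ _] := run.
have [//|fail] := pselect (successful f sigma D x alpha k).
have := enorm_grad_le_of_unsuccessful_poll f_diff f_grad grad_lip (ltW L0)
  (ltW sigma0) (direct_search_run_alpha_gt0 run k) (pss k) (D_le k)
  (fun d dD dec => fail (ex_intro2 _ _ d dD dec)) => grad_le.
have denom_gt0 : 0 < (L * dmax ^+ 2 + sigma) * Lambda.
  by rewrite mulr_gt0 // ltr_wpDl // mulr_ge0 ?sqr_ge0 // ltW.
by rewrite ltr_pdivlMr // in alpha_lt; lra.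
Qed.
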